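(* Let $f\colon\mathbb{R}^n\to\mathbb{R}$ be convex and differentiable with $\|\nabla f(x)-\nabla f(y)\|\le L\|x-y\|$ (Euclidean norm, $L>0$), with a minimizer $x_\star$, $f_\star=f(x_\star)$. Given $x_0$, let $y_0=x_0$ and for $k=0,1,\dots$ \[ y_{k+1}=x_k-\tfrac1L\nabla f(x_k),\qquad x_{k+1}=y_{k+1}+\frac{k}{k+3}(y_{k+1}-y_k)+\frac{k+2}{k+3}(y_{k+1}-x_k). \] Then for $k=1,2,\dots$, $f(y_k)-f_\star\le\dfrac{L\|x_0-x_\star\|^2}{(k+1)^2}$.
   Context: This iteration is called Simple-OGM. *)

From HB Require Import structures.
From mathcomp Require Import all_boot all_order all_algebra.
From mathcomp Require Import all_classical all_reals all_analysis.
Set Implicit Arguments. Unset Strict Implicit. Unset Printing Implicit Defensive.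
Import Order.TTheory GRing.Theory Num.Theory.
Import numFieldNormedType.Exports.
Local Open Scope ring_scope.

(* Euclidean inner product and norm on R^n (the library norm on matrices is the sup norm). *)
Definition dotv {R : realType} {n : nat} (u v : 'rV[R]_n) : R :=
  \sum_(i < n) u 0 i * v 0 i.
Definition enorm {R : realType} {n : nat} (u : 'rV[R]_n) : R :=
  Num.sqrt (dotv u u).

Definition gradient {R : realType} {n : nat} (f : 'rV[R]_n -> R) (x : 'rV[R]_n)
  : 'rV[R]_n := \row_(i < n) ('d f x (delta_mx 0 i : 'rV[R]_n)).

Definition convex_fun {R : realType} {n : nat} (f : 'rV[R]_n -> R) : Prop :=
  forall (x y : 'rV[R]_n) (t : R), 0 <= t -> t <= 1 ->
    f ((1 - t) *: x + t *: y) <= (1 - t) * f x + t * f y.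

From HB Require Import structures.
From mathcomp Require Import all_boot all_order all_algebra.
From mathcomp Require Import all_classical all_reals all_analysis.
From mathcomp Require Import ring lra.
Import Order.TTheory GRing.Theory Num.Theory.
Import numFieldNormedType.Exports.
Local Open Scope classical_set_scope.
Local Open Scope ring_scope.

(* Put theta_k = (k+2)/2, g_k = grad f(x_k) and
   z_k = theta_k x_k - (theta_k - 1) y_k; the recursion gives
   z_(k+1) = z_k - (2 theta_k / L) g_k. For a convex f with L-Lipschitz gradient,
     f a - f b <= <grad f a, a - b> - |grad f a - grad f b|^2 / (2L),
   and the potential
     Phi_k = 2 theta_k^2 (f x_k - f* - |g_k|^2 / (2L)) + L/2 |z_(k+1) - x*|^2
   is nonincreasing: Phi_(k+1) <= Phi_k is a nonnegative combination of this
   inequality at (x_(k+1), x* ) and (x_(k+1), x_k) and of |g_k|^2/(2L) <= f x_k - f*.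
   As Phi_0 <= L/2 |x_0 - x*|^2 and the gradient step gives
   f y_(k+1) - f* <= f x_k - f* - |g_k|^2 / (2L), the rate follows. *)

Section EuclideanInnerProduct.
Context {R : realType} {n : nat}.
Implicit Types (u v w : 'rV[R]_n) (c : R).

Local Ltac dotv_expand := rewrite /dotv ?mulr_sumr ?mulr_suml;
  do 5 rewrite -?big_split -?sumrN /=; apply: eq_bigr => i _; rewrite ?mxE; ring.

Lemma dotvDl u w v : dotv (u + w) v = dotv u v + dotv w v.
Proof. dotv_expand. Qed.

Lemma dotvDr u w v : dotv v (u + w) = dotv v u + dotv v w.
Proof. dotv_expand. Qed.

Lemma dotvNl u v : dotv (- u) v = - dotv u v.
Proof. dotv_expand. Qed.

Lemma dotvNr u v : dotv v (- u) = - dotv v u.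
Proof. dotv_expand. Qed.

Lemma dotvZl c u v : dotv (c *: u) v = c * dotv u v.
Proof. dotv_expand. Qed.

Lemma dotvZr c u v : dotv v (c *: u) = c * dotv v u.
Proof. dotv_expand. Qed.

Lemma dotv_sqrB u w : dotv (u - w) (u - w) = dotv u u - 2 * dotv u w + dotv w w.
Proof. dotv_expand. Qed.

Lemma dotv_sqrBZ u w c :
  dotv (u - c *: w) (u - c *: w) = dotv u u - 2 * c * dotv w u + c ^+ 2 * dotv w w.
Proof. dotv_expand. Qed.

Lemma dotvv_ge0 u : 0 <= dotv u u.
Proof. by apply: sumr_ge0 => i _; rewrite -expr2 sqr_ge0. Qed.

Lemma dotvv_eq0 u : dotv u u = 0 -> u = 0.
Proof.
move=> /eqP; rewrite psumr_eq0 => [/allP u0|i _]; last by rewrite -expr2 sqr_ge0.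
apply/rowP => j; rewrite mxE.
by have /implyP/(_ isT) := u0 j (mem_index_enum j); rewrite mulf_eq0 orbb => /eqP.
Qed.

Lemma sqr_enorm u : enorm u ^+ 2 = dotv u u.
Proof. by rewrite sqr_sqrtr // dotvv_ge0. Qed.

Lemma enormZ c u : enorm (c *: u) = `|c| * enorm u.
Proof. by rewrite /enorm dotvZl dotvZr mulrA -expr2 sqrtrM ?sqr_ge0 // sqrtr_sqr. Qed.

Lemma enorm_eq0 u : enorm u = 0 -> u = 0.
Proof. by move=> u0; apply: dotvv_eq0; rewrite -sqr_enorm u0 expr0n. Qed.

Lemma dotv_cauchy_schwarz u v : dotv u v <= enorm u * enorm v.
Proof.
have [/enorm_eq0->|nu0] := eqVneq (enorm u) 0.
  by rewrite /dotv big1 ?mulr_ge0 ?sqrtr_ge0 // => i _; rewrite mxE mul0r.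
have [/enorm_eq0->|nv0] := eqVneq (enorm v) 0.
  by rewrite /dotv big1 ?mulr_ge0 ?sqrtr_ge0 // => i _; rewrite mxE mulr0.
have nu_gt0 : 0 < enorm u by rewrite lt_def nu0 sqrtr_ge0.
have nv_gt0 : 0 < enorm v by rewrite lt_def nv0 sqrtr_ge0.
have := dotvv_ge0 (enorm v *: u - enorm u *: v).
have -> : dotv (enorm v *: u - enorm u *: v) (enorm v *: u - enorm u *: v) =
    2 * enorm u * enorm v * (enorm u * enorm v - dotv u v).
  rewrite dotv_sqrB !(dotvZl, dotvZr) -!sqr_enorm; ring.
by rewrite pmulr_rge0 ?subr_ge0 // !mulr_gt0.
Qed.

End EuclideanInnerProduct.

Lemma diff_gradient {R : realType} {n : nat} (f : 'rV[R]_n -> R) (a v : 'rV[R]_n) :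
  'd f a v = dotv (gradient f a) v.
Proof.
rewrite {1}(row_sum_delta v) linear_sum /dotv; apply: eq_bigr => i _.
by rewrite linearZ /= /gradient mxE mulrC.
Qed.

Section SmoothConvex.
Context {R : realType} {n : nat} {f : 'rV[R]_n -> R} {G : 'rV[R]_n -> 'rV[R]_n}.
Implicit Types a b v w : 'rV[R]_n.
(* [G] stands for [gradient f] (see [diff_gradient]); keeping it abstract stops
   rewriting from unfolding [gradient] into its matrix entries. *)
Hypothesis G_gradient : forall a v, 'd f a v = dotv (G a) v.
Hypothesis f_diff : forall z, differentiable f z.

Lemma is_derive_line a v (t : R) :
  is_derive t 1 (fun s : R => f (a + s *: v)) (dotv (G (a + t *: v)) v).
Proof.
have quotE : (fun h : R => h^-1 *: (((fun s => f (a + s *: v)) \o shift t) (h *: 1)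
                                     - f (a + t *: v)))
           = (fun h : R => h^-1 *: ((f \o shift (a + t *: v)) (h *: v) - f (a + t *: v))).
  apply: funext => h /=; congr (_ *: (f _ - _)).
  by rewrite /shift /= [h *: 1]mulr1 scalerDl addrCA addrA.
have dv : derivable f (a + t *: v) v by exact: diff_derivable.
apply: DeriveDef; first by rewrite /derivable quotE.
by rewrite /derive quotE -/(derive f (a + t *: v) v) deriveE // G_gradient.
Qed.

Hypothesis f_convex : convex_fun f.

Lemma convex_first_order b w : f b + dotv (G b) (w - b) <= f w.
Proof.
set v := w - b.
pose q h := h^-1 *: ((f \o shift b) (h *: v) - f b).
have q_cvg : q @ 0^' --> 'D_v f b by exact: (diff_derivable (f_diff b)).
have q_cvg_right : q @ 0^'+ --> 'D_v f b.
  move=> A /q_cvg /nbhs_ballP [_ /posnumP[e] eA].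
  by exists e%:num => //= h eh; rewrite lt_def => /andP[h0 _]; apply: eA.
suff : 'D_v f b <= f w - f b by rewrite deriveE // G_gradient; lra.
apply: (cvgr_to_le q_cvg_right); near=> h.
have h_gt0 : 0 < h by near: h; exact: nbhs_right_gt.
have h_lt1 : h < 1 by near: h; exact: nbhs_right_lt ltr01.
have := f_convex b w h (ltW h_gt0) (ltW h_lt1).
have -> : (1 - h) *: b + h *: w = b + h *: v by apply/rowP => i; rewrite /v !mxE; ring.
rewrite /q /= /shift /= [h *: v + b]addrC -[h^-1 *: _]/(h^-1 * _) ler_pdivrMl //; lra.
Unshelve. all: by end_near.
Qed.

Context {L : R}.
Hypothesis L_gt0 : 0 < L.
Hypothesis gradient_lipschitz : forall u v, enorm (G u - G v) <= L * enorm (u - v).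

Lemma gradient_line_increment a v (c : R) : 0 <= c ->
  dotv (G (a + c *: v) - G a) v <= c * L * dotv v v.
Proof.
move=> c_ge0.
have shift_a : a + c *: v - a = c *: v by rewrite addrC addKr.
have := gradient_lipschitz (a + c *: v) a; rewrite shift_a enormZ ger0_norm // => lip.
have -> : c * L * dotv v v = L * (c * enorm v) * enorm v by rewrite -sqr_enorm expr2; ring.
apply: le_trans (dotv_cauchy_schwarz (G (a + c *: v) - G a) v) _.
by apply: ler_wpM2r lip; exact: sqrtr_ge0.
Qed.

Lemma descent_lemma a w :
  f w <= f a + dotv (G a) (w - a) + L / 2 * dotv (w - a) (w - a).
Proof.
set v := w - a; set c1 := dotv (G a) v; set c2 := L / 2 * dotv v v.
pose k (s : R) := f (a + s *: v) - (c1 * s + c2 * (s * s)).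
have k_derive (s : R) : is_derive s 1 k (dotv (G (a + s *: v)) v - c1 - s * L * dotv v v).
  apply: is_derive_eq.
    exact: is_deriveB (is_derive_line a v s) (is_deriveD (is_deriveZ c1 (is_derive_id s 1))
             (is_deriveZ c2 (is_deriveM (is_derive_id s 1) (is_derive_id s 1)))).
  change (dotv (G (a + s *: v)) v - (c1 * 1 + c2 * (s * 1 + s * 1))
          = dotv (G (a + s *: v)) v - c1 - s * L * dotv v v).
  by rewrite /c2; field.
have k_cont : {within `[0, 1], continuous k}.
  by apply: derivable_within_continuous => s _; exact: (@ex_derive _ _ _ _ _ _ _ (k_derive s)).
have [c /andP[c_ge0 _] mvt] := MVT_segment ler01 (fun s _ => k_derive s) k_cont.
have k_decr : k 1 - k 0 <= 0.
  rewrite mvt subr0 mulr1 subr_le0 /c1 -dotvNl -(dotvDl (G (a + c *: v))).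
  exact: gradient_line_increment.
move: k_decr; rewrite /k scale1r scale0r addr0 /v addrCA subrr addr0; lra.
Qed.

Lemma gradient_step_descent a :
  f (a - L^-1 *: G a) <= f a - dotv (G a) (G a) / (2 * L).
Proof.
have := descent_lemma a (a - L^-1 *: G a).
have -> : a - L^-1 *: G a - a = - (L^-1 *: G a) by rewrite addrC addKr.
rewrite dotvNr dotvNl dotvNr opprK !dotvZr dotvZl.
rewrite (_ : f a + - (L^-1 * dotv (G a) (G a)) + L / 2 * (L^-1 * (L^-1 * dotv (G a) (G a)))
             = f a - dotv (G a) (G a) / (2 * L)) //.
by field; exact: lt0r_neq0.
Qed.

Lemma smooth_convex_interpolation a b :
  f a - f b <= dotv (G a) (a - b) - dotv (G a - G b) (G a - G b) / (2 * L).
Proof.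
pose d := G b - G a; pose w := b - L^-1 *: d.
have lower := convex_first_order a w.
have upper := descent_lemma b w.
have wa : w - a = (b - a) - L^-1 *: d by rewrite /w addrAC.
have wb : w - b = - (L^-1 *: d) by rewrite /w addrC addKr.
have dd : dotv d d = dotv (G b) d - dotv (G a) d by rewrite {1}/d dotvDl dotvNl.
rewrite wa dotvDr dotvNr dotvZr in lower.
rewrite wb dotvNr dotvNl dotvNr opprK !dotvZr dotvZl dd in upper.
have ab : a - b = - (b - a) by rewrite opprB.
have Gab : G a - G b = - d by rewrite opprB.
rewrite ab Gab dotvNr dotvNl dotvNr opprK dd.
move: lower upper; set A1 := dotv (G a) (b - a); set A2 := dotv (G a) d.
set A3 := dotv (G b) d => lower upper.
have quadE : L / 2 * (L^-1 * (L^-1 * (A3 - A2))) = (A3 - A2) / (2 * L).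
  by field; exact: lt0r_neq0.
have goalE : - A1 - (A3 - A2) / (2 * L) = - A1 + L^-1 * A2 - L^-1 * A3 + (A3 - A2) / (2 * L).
  by field; exact: lt0r_neq0.
rewrite quadE in upper; rewrite goalE; lra.
Qed.

End SmoothConvex.

Lemma potential_decrease_certificate {R : realType} (L t f1 f0 fs A B C G1 G0 N1 N2 P : R) :
  0 < L -> 1 <= t ->
  N2 = N1 - 4 * t / L * P + 4 * t ^+ 2 / L ^+ 2 * G1 ->
  P = A + (t - 1) * (B + C / L) ->
  f1 - fs <= A - G1 / (2 * L) ->
  f1 - f0 <= B - (G1 - 2 * C + G0) / (2 * L) ->
  G0 / (2 * L) <= f0 - fs ->
  2 * t ^+ 2 * (f1 - fs - G1 / (2 * L)) + L / 2 * N2 <=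
  2 * (t - 1 / 2) ^+ 2 * (f0 - fs - G0 / (2 * L)) + L / 2 * N1.
Proof.
move=> L_gt0 t_ge1 -> -> opt_ineq prev_ineq gap_ineq.
pose s1 := A - G1 / (2 * L) - (f1 - fs).
pose s2 := B - (G1 - 2 * C + G0) / (2 * L) - (f1 - f0).
pose s3 := f0 - fs - G0 / (2 * L).
rewrite -subr_ge0 (_ : _ - _ = 2 * t * s1 + 2 * t * (t - 1) * s2 + s3 / 2); last first.
  by rewrite /s1 /s2 /s3; field; exact: lt0r_neq0.
have s1_ge0 : 0 <= s1 by rewrite /s1; lra.
have s2_ge0 : 0 <= s2 by rewrite /s2; lra.
have s3_ge0 : 0 <= s3 by rewrite /s3; lra.
by apply: addr_ge0; [apply: addr_ge0|]; apply: mulr_ge0 => //; nra.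
Qed.

Section OptimizedGradientMethod.
Context {R : realType} {n : nat} {f : 'rV[R]_n -> R} {G : 'rV[R]_n -> 'rV[R]_n}.
Context {L : R} {xs : 'rV[R]_n}.
Hypothesis G_gradient : forall a v, 'd f a v = dotv (G a) v.
Hypothesis f_diff : forall z, differentiable f z.
Hypothesis f_convex : convex_fun f.
Hypothesis L_gt0 : 0 < L.
Hypothesis G_lipschitz : forall u v, enorm (G u - G v) <= L * enorm (u - v).
Hypothesis xs_min : forall z, f xs <= f z.

Lemma gradient_sqr_le_gap a : dotv (G a) (G a) / (2 * L) <= f a - f xs.
Proof.
have := gradient_step_descent G_gradient f_diff L_gt0 G_lipschitz a.
have := xs_min (a - L^-1 *: G a); lra.
Qed.

Lemma gradient_minimizer : G xs = 0.
Proof.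
have := gradient_sqr_le_gap xs; rewrite subrr pmulr_lle0 ?invr_gt0 ?mulr_gt0 // => le0.
by apply: dotvv_eq0; apply/eqP; rewrite eq_le le0 dotvv_ge0.
Qed.

Lemma interpolation_minimizer a :
  f a - f xs <= dotv (G a) (a - xs) - dotv (G a) (G a) / (2 * L).
Proof.
have := smooth_convex_interpolation G_gradient f_diff f_convex L_gt0 G_lipschitz a xs.
by rewrite gradient_minimizer subr0.
Qed.

Context {x y : nat -> 'rV[R]_n}.
Hypothesis y0 : y 0%N = x 0%N.
Hypothesis y_step : forall k, y k.+1 = x k - L^-1 *: G (x k).
Hypothesis x_step : forall k : nat, x k.+1 = y k.+1
  + (k%:R / (k%:R + 3)) *: (y k.+1 - y k) + ((k%:R + 2) / (k%:R + 3)) *: (y k.+1 - x k).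

Definition theta (k : nat) : R := (k%:R + 2) / 2.

Definition z k := theta k *: x k - (theta k - 1) *: y k.

Definition potential k :=
  2 * theta k ^+ 2 * (f (x k) - f xs - dotv (G (x k)) (G (x k)) / (2 * L))
  + L / 2 * dotv (z k.+1 - xs) (z k.+1 - xs).

Lemma theta0 : theta 0 = 1.
Proof. by rewrite /theta add0r divff. Qed.

Lemma theta_pred k : theta k = theta k.+1 - 1 / 2.
Proof. by rewrite /theta -natr1; field. Qed.

Lemma theta_ge1 k : 1 <= theta k.
Proof. by rewrite /theta ler_pdivlMr // mul1r lerDr ler0n. Qed.

Lemma z0 : z 0 = x 0%N.
Proof. by rewrite /z theta0 y0 subrr scale0r subr0 scale1r. Qed.

Lemma z_step k : z k.+1 = z k - (2 * theta k / L) *: G (x k).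
Proof.
rewrite /z x_step y_step /theta -natr1; apply/rowP => i; rewrite !mxE.
have k_ge0 : 0 <= k%:R :> R by exact: ler0n.
by field; rewrite lt0r_neq0 //=; apply: lt0r_neq0; lra.
Qed.

Lemma z_succ k : z k.+1 = x k.+1 + (theta k.+1 - 1) *: (x k.+1 - x k + L^-1 *: G (x k)).
Proof. by rewrite /z y_step; apply/rowP => i; rewrite !mxE; ring. Qed.

Lemma potential_step k : potential k.+1 <= potential k.
Proof.
have opt_ineq := interpolation_minimizer (x k.+1).
have prev_ineq :=
  smooth_convex_interpolation G_gradient f_diff f_convex L_gt0 G_lipschitz (x k.+1) (x k).
rewrite dotv_sqrB in prev_ineq.
set t := theta k.+1; set g := G (x k.+1).
have zE : dotv (z k.+2 - xs) (z k.+2 - xs) = dotv (z k.+1 - xs) (z k.+1 - xs)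
    - 4 * t / L * dotv g (z k.+1 - xs) + 4 * t ^+ 2 / L ^+ 2 * dotv g g.
  rewrite z_step [z k.+1 - _ - xs]addrAC dotv_sqrBZ -/t -/g.
  by field; exact: lt0r_neq0.
have PE : dotv g (z k.+1 - xs) = dotv g (x k.+1 - xs)
    + (t - 1) * (dotv g (x k.+1 - x k) + dotv g (G (x k)) / L).
  by rewrite z_succ -/t [x k.+1 + _ - xs]addrAC !(dotvDr, dotvZr); ring.
rewrite /potential (theta_pred k) -/t.
exact: potential_decrease_certificate L_gt0 (theta_ge1 k.+1) zE PE opt_ineq prev_ineq
  (gradient_sqr_le_gap (x k)).
Qed.

Lemma potential_base : potential 0 <= L / 2 * dotv (x 0%N - xs) (x 0%N - xs).
Proof.
have opt_ineq := interpolation_minimizer (x 0%N).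
rewrite /potential (z_step 0) z0 theta0 [x 0%N - _ - xs]addrAC dotv_sqrBZ.
move: opt_ineq; set D := dotv (G (x 0%N)) (x 0%N - xs); set N := dotv (G (x 0%N)) (G (x 0%N)).
move=> opt_ineq; rewrite -subr_ge0.
rewrite (_ : _ - _ = 2 * (D - N / (2 * L) - (f (x 0%N) - f xs))); first lra.
by field; exact: lt0r_neq0.
Qed.

Lemma potential_bound k : potential k <= L / 2 * dotv (x 0%N - xs) (x 0%N - xs).
Proof.
elim: k => [|k IHk]; first exact: potential_base.
exact: le_trans (potential_step k) IHk.
Qed.

Lemma ogm_rate k :
  f (y k.+1) - f xs <= L * enorm (x 0%N - xs) ^+ 2 / (k.+1%:R + 1) ^+ 2.
Proof.
have descent := gradient_step_descent G_gradient f_diff L_gt0 G_lipschitz (x k).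
rewrite -y_step in descent.
have := potential_bound k; rewrite /potential.
have -> : 2 * theta k ^+ 2 = (k.+1%:R + 1) ^+ 2 / 2 by rewrite /theta -natr1; field.
have c_gt0 : 0 < (k.+1%:R + 1 : R) ^+ 2 by rewrite exprn_gt0 // addr_gt0 ?ltr0Sn.
have : 0 <= L / 2 * dotv (z k.+1 - xs) (z k.+1 - xs).
  by rewrite mulr_ge0 ?dotvv_ge0 ?divr_ge0 ?ltW.
rewrite sqr_enorm ler_pdivlMr //.
set c := (k.+1%:R + 1) ^+ 2; set e := f (x k) - f xs - _ / (2 * L).
move=> z_ge0 bound.
have : (f (y k.+1) - f xs) * c <= e * c by apply: ler_wpM2r; [exact: ltW | rewrite /e; lra].
lra.
Qed.

End OptimizedGradientMethod.

Theorem corollary2 (R : realType) (n : nat) (f : 'rV[R]_n -> R) (L : R)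
  (xs : 'rV[R]_n) (x y : nat -> 'rV[R]_n) :
  convex_fun f ->
  (forall z : 'rV[R]_n, differentiable f z) ->
  0 < L ->
  (forall u v : 'rV[R]_n,
      enorm (gradient f u - gradient f v) <= L * enorm (u - v)) ->
  (forall z : 'rV[R]_n, f xs <= f z) ->
  y 0%N = x 0%N ->
  (forall k : nat, y k.+1 = x k - L^-1 *: gradient f (x k)) ->
  (forall k : nat, x k.+1 = y k.+1
      + (k%:R / (k%:R + 3)) *: (y k.+1 - y k)
      + ((k%:R + 2) / (k%:R + 3)) *: (y k.+1 - x k)) ->
  forall k : nat, (1 <= k)%N ->
    f (y k) - f xs <= L * enorm (x 0%N - xs) ^+ 2 / (k%:R + 1) ^+ 2.
Proof.
move=> f_convex f_diff L_gt0 grad_lip xs_min y0 y_step x_step [|k] // _.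
exact: (ogm_rate (diff_gradient f) f_diff f_convex L_gt0 grad_lip xs_min y0 y_step x_step).
Qed.
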